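(* Let $n\geqslant 0$, $r\geqslant 1$ and $d_1,\dots,d_r>1$ be integers, let $X_n(\underline{d})=X_n(d_1,\dots,d_r)\subset\mathbb{C}P^{n+r}$ be a complete intersection with canonical bundle $K$, and set $c_1=n+r+1-\sum_{i=1}^r d_i$. Let $N$ be a positive integer with $c_1\equiv 0\pmod N$. Then for every integer $k$ with $0\leqslant k\leqslant N$: (1) If $c_1>0$, then $\chi(X_n(\underline{d}),K^{k/N})=1$ if $k=0$, $=0$ if $0<k<N$, and $=(-1)^n$ if $k=N$. (2) If $c_1=0$, then $\chi(X_n(\underline{d}),K^{k/N})=1+(-1)^n$. (3) If $c_1<0$, then $(-1)^n\chi(X_n(\underline{d}),K^{k/N})\geqslant \binom{n+1-\frac{N-k}{N}c_1}{n+1}+(-1)^n\binom{n+1-\frac{k}{N}c_1}{n+1}$ if $0\leqslant \frac{k}{N}\leqslant\frac12$; $\chi(X_n(\underline{d}),K^{k/N})=0$ if $\frac{k}{N}=\frac12$ and $n$ is odd; $\chi(X_n(\underline{d}),K^{k/N})\geqslant \binom{n+1-\frac{k}{N}c_1}{n+1}+(-1)^n\binom{n+1-\frac{N-k}{N}c_1}{n+1}$ if $\frac12\leqslant \frac{k}{N}\leqslant 1$.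
   Context: A complete intersection $X_n(d_1,\dots,d_r)\subset\mathbb{C}P^{n+r}$ is a compact complex $n$-dimensional manifold given as the transversal intersection of $r$ nonsingular hypersurfaces of degrees $d_1,\dots,d_r$. Its first Chern class is $c_1 x$ with $c_1=n+r+1-\sum_i d_i$, where $x$ is the pullback of the hyperplane class, generating $H^2\cong\mathbb{Z}$. For a compact complex $n$-manifold $M$ with canonical bundle $K$ and a rational number $s$, $\chi(M,K^{s})$ denotes the genus with characteristic power series $Q(x)=e^{-sx}\frac{x}{1-e^{-x}}$, i.e. $\chi(M,K^s)=\big(e^{-s\,c_1(M)}\,{\rm td}(TM)\big)[M]$ (for $s=0$ this is the Todd genus; for $s=1/2$ the $\hat A$-genus). Generalized binomial coefficients: $\binom{a}{m}=\frac{a(a-1)\cdots(a-m+1)}{m!}$. *)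

From HB Require Import structures.
From mathcomp Require Import all_boot all_order all_algebra.
Set Implicit Arguments. Unset Strict Implicit. Unset Printing Implicit Defensive.
Import Order.TTheory GRing.Theory Num.Theory.
Local Open Scope ring_scope.

(* Formal power series in x with rational coefficients, handled as
   polynomials truncated to the first m coefficients (i.e. modulo x^m). *)
Definition trunc (m : nat) (p : {poly rat}) : {poly rat} := \poly_(i < m) p`_i.

Definition expS (m : nat) (a : rat) : {poly rat} :=
  \poly_(i < m) (a ^+ i / (i`!)%:R).

(* multiplicative inverse mod x^m of a series with constant term 1 *)
Definition invS (m : nat) (p : {poly rat}) : {poly rat} :=
  trunc m (\sum_(j < m) (1 - p) ^+ j).

(* x / (1 - e^{-x}) mod x^m, as inverse of (1 - e^{-x})/x = sum (-1)^i x^i/(i+1)! *)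
Definition toddS (m : nat) : {poly rat} :=
  invS m (\poly_(i < m) ((-1) ^+ i / (i.+1`!)%:R)).

Definition QS (s : rat) (m : nat) : {poly rat} :=
  trunc m (expS m (- s) * toddS m).

Definition scaleS (c : rat) (p : {poly rat}) : {poly rat} :=
  \poly_(i < size p) (p`_i * c ^+ i).

Definition c1_CI (n : nat) (d : seq nat) : int :=
  (n + size d + 1)%:Z - (\sum_(di <- d) di)%:Z.

(* chi(X_n(d), K^s) = ( e^{-s c_1(X)} td(TX) )[X].
   With x the hyperplane class, TX (+) O(d_1) (+) ... (+) O(d_r) = (n+r+1) O(1)
   stably, so the genus class with characteristic series Q is
   Q(x)^{n+r+1} / prod_i Q(d_i x), and evaluating a degree-n class a x^n on
   the fundamental class gives a * deg X = a * prod_i d_i. *)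
Definition chiK (n : nat) (d : seq nat) (s : rat) : rat :=
  let m := n.+1 in
  (\prod_(di <- d) (di%:R : rat)) *
  (trunc m (QS s m ^+ (n + size d + 1)
            * invS m (trunc m (\prod_(di <- d) scaleS di%:R (QS s m)))))`_n.

Definition gbinom (a : rat) (m : nat) : rat :=
  (\prod_(i < m) (a - i%:R)) / (m`!)%:R.

From HB Require Import structures.
From mathcomp Require Import all_boot all_order all_algebra.
From mathcomp Require Import ring lra zify.
From Corelib Require Import Setoid Morphisms.
Import Order.TTheory GRing.Theory Num.Theory.
Local Open Scope ring_scope.
Set Implicit Arguments. Unset Strict Implicit. Unset Printing Implicit Defensive.

(* With x the hyperplane class, K^s contributes e^(-s c1 x) and the Todd class of
   X is T(x)^(n+r+1) / prod_i T(d_i x), where T(x) = x / (1 - e^(-x)).  Since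
   d U(d x) = U(x) (1 + e^(-x) + ... + e^(-(d-1)x)) for U = 1/T, this gives
     chi(X, K^s) = sum_i h_i [x^n] e^((-s c1 - i) x) T(x)^(n+1),
   where h = prod_i (1 + y + ... + y^(d_i - 1)) is the h-polynomial of X, and
   [x^n] e^(t x) T(x)^(n+1) = binom(t + n, n) by a recursion for the Euler
   operator x d/dx.  When a = s c1 is an integer, splitting binom(n + y, n) into
   its values for y >= 0 and, through binom(n + y, n) = (-1)^n binom(-y - 1, n),
   for y <= -n-1, and using that h is palindromic, yields Serre duality
     chi(X, K^s) = H(-a) + (-1)^n H(a - c1)
   for the Hilbert function H(t) = sum_(i <= t) h_i binom(n + t - i, n).  The
   three cases then follow from H(t) = 0 for t < 0, H(0) = 1, and the fact that
   H(v) - binom(n + 1 + v, n + 1) = sum_(i <= v) (h_i - 1) binom(n + v - i, n)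
   is nonnegative and nondecreasing for v <= deg h, as h_i >= 1 there. *)

Lemma natr_fact_neq0 (R : numDomainType) i : (i`!%:R : R) != 0.
Proof. by rewrite pnatr_eq0 -lt0n fact_gt0. Qed.

Lemma addr_natr_neq0 (R : numDomainType) (a : R) i : 0 < a -> a + i%:R != 0.
Proof. by move=> a_gt0; rewrite lt0r_neq0 // ltr_wpDr. Qed.


Section TruncatedSeries.
Variables (R : comNzRingType) (m : nat).
Implicit Types p q : {poly R}.

Definition eqmodX p q := take_poly m p = take_poly m q.

Lemma take_polyMl p q : take_poly m (take_poly m p * q) = take_poly m (p * q).
Proof.
rewrite -{2}(poly_take_drop m p) mulrDl take_polyD -mulrA (mulrC 'X^m) mulrA.
by rewrite take_polyMXn_0 addr0.
Qed.

Lemma take_polyMr p q : take_poly m (p * take_poly m q) = take_poly m (p * q).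
Proof. by rewrite mulrC take_polyMl mulrC. Qed.

Lemma eqmodX_refl p : eqmodX p p. Proof. by []. Qed.

Lemma eqmodX_sym p q : eqmodX p q -> eqmodX q p. Proof. exact: esym. Qed.

Lemma eqmodX_trans p q r : eqmodX p q -> eqmodX q r -> eqmodX p r.
Proof. exact: etrans. Qed.

Lemma eqmodX_take p : eqmodX (take_poly m p) p.
Proof. by rewrite /eqmodX take_poly_id // size_take_poly. Qed.

Lemma eqmodX_add p p' q q' : eqmodX p p' -> eqmodX q q' -> eqmodX (p + q) (p' + q').
Proof. by rewrite /eqmodX !take_polyD => -> ->. Qed.

Lemma eqmodX_mul p p' q q' : eqmodX p p' -> eqmodX q q' -> eqmodX (p * q) (p' * q').
Proof.
by rewrite /eqmodX => e1 e2; rewrite -take_polyMl e1 take_polyMl -take_polyMr e2 take_polyMr.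
Qed.

Lemma eqmodX_scale c p p' : eqmodX p p' -> eqmodX (c *: p) (c *: p').
Proof. by rewrite /eqmodX !take_polyZ => ->. Qed.

Lemma eqmodX_opp p p' : eqmodX p p' -> eqmodX (- p) (- p').
Proof. by rewrite -!scaleN1r; apply: eqmodX_scale. Qed.

Lemma eqmodX_muln p p' k : eqmodX p p' -> eqmodX (p *+ k) (p' *+ k).
Proof. by move=> e; elim: k => // k IH; rewrite !mulrS; apply: eqmodX_add. Qed.

Lemma eqmodX_exp p p' k : eqmodX p p' -> eqmodX (p ^+ k) (p' ^+ k).
Proof. by move=> e; elim: k => // k IH; rewrite !exprS; apply: eqmodX_mul. Qed.

Lemma eqmodX_prod I (r : seq I) (F G : I -> {poly R}) :
  (forall i, eqmodX (F i) (G i)) -> eqmodX (\prod_(i <- r) F i) (\prod_(i <- r) G i).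
Proof.
move=> e; elim: r => [|x r IH]; first by rewrite !big_nil.
by rewrite !big_cons; apply: eqmodX_mul.
Qed.

Lemma eqmodX_sum I (r : seq I) (F G : I -> {poly R}) :
  (forall i, eqmodX (F i) (G i)) -> eqmodX (\sum_(i <- r) F i) (\sum_(i <- r) G i).
Proof.
move=> e; elim: r => [|x r IH]; first by rewrite !big_nil.
by rewrite !big_cons; apply: eqmodX_add.
Qed.

Lemma eqmodX_coef p q i : (i < m)%N -> eqmodX p q -> p`_i = q`_i.
Proof. by move=> im /polyP/(_ i); rewrite !coef_take_poly im. Qed.

Lemma take_poly_exp_eq0 p : p`_0 = 0 -> take_poly m (p ^+ m) = 0.
Proof.
move=> p0; have -> : p = drop_poly 1 p * 'X^1.
  rewrite -{1}(poly_take_drop 1 p); suff -> : take_poly 1 p = 0 by rewrite add0r.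
  by apply/polyP => -[|i]; rewrite coef_take_poly coef0.
by rewrite exprMn -exprM mul1n take_polyMXn_0.
Qed.

Lemma eqmodX_inv_unique p q q' :
  eqmodX (p * q) 1 -> eqmodX (p * q') 1 -> eqmodX q q'.
Proof.
rewrite /eqmodX => e e'.
rewrite -[q]mulr1 -take_polyMr -e' take_polyMr mulrA (mulrC q) -take_polyMl e.
by rewrite take_polyMl mul1r.
Qed.

End TruncatedSeries.

Add Parametric Relation (R : comNzRingType) (m : nat) : {poly R} (eqmodX m)
  reflexivity proved by (@eqmodX_refl R m)
  symmetry proved by (@eqmodX_sym R m)
  transitivity proved by (@eqmodX_trans R m) as eqmodX_rel.

Add Parametric Morphism (R : comNzRingType) (m : nat) : (@GRing.add {poly R})
  with signature eqmodX m ==> eqmodX m ==> eqmodX m as eqmodX_add_morph.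
Proof. by move=> *; apply: eqmodX_add. Qed.

Add Parametric Morphism (R : comNzRingType) (m : nat) : (@GRing.mul {poly R})
  with signature eqmodX m ==> eqmodX m ==> eqmodX m as eqmodX_mul_morph.
Proof. by move=> *; apply: eqmodX_mul. Qed.

Add Parametric Morphism (R : comNzRingType) (m : nat) : (@GRing.opp {poly R})
  with signature eqmodX m ==> eqmodX m as eqmodX_opp_morph.
Proof. exact: eqmodX_opp. Qed.

Add Parametric Morphism (R : comNzRingType) (m : nat) (c : R) : (@GRing.scale R {poly R} c)
  with signature eqmodX m ==> eqmodX m as eqmodX_scale_morph.
Proof. exact: eqmodX_scale. Qed.

Add Parametric Morphism (R : comNzRingType) (m : nat) : (@GRing.natmul {poly R})
  with signature eqmodX m ==> eq ==> eqmodX m as eqmodX_muln_morph.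
Proof. by move=> *; apply: eqmodX_muln. Qed.

Add Parametric Morphism (R : comNzRingType) (m : nat) : (@GRing.exp {poly R})
  with signature eqmodX m ==> eq ==> eqmodX m as eqmodX_exp_morph.
Proof. by move=> *; apply: eqmodX_exp. Qed.

Lemma truncE : trunc = @take_poly rat.
Proof. by []. Qed.

Section RationalSeries.
Variable m : nat.
Implicit Types p q : {poly rat}.

Lemma mul_invS p : (0 < m)%N -> p`_0 = 1 -> eqmodX m (p * invS m p) 1.
Proof.
move=> m_gt0 p0; rewrite /eqmodX /invS take_polyMr.
have -> : p * \sum_(j < m) (1 - p) ^+ j = 1 - (1 - p) ^+ m.
  have := subrX1 (1 - p) m; rewrite addrAC subrr add0r mulNr => /eqP.
  by rewrite -eqr_oppLR opprB => /eqP <-.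
by rewrite take_polyD -scaleN1r take_polyZ take_poly_exp_eq0 ?scaler0 ?addr0 //
  coefB coef1 p0 subrr.
Qed.

Lemma invS_coef0 p : (0 < m)%N -> p`_0 = 1 -> (invS m p)`_0 = 1.
Proof.
move=> m_gt0 p0; have := eqmodX_coef m_gt0 (mul_invS m_gt0 p0).
by rewrite coef0M p0 mul1r coef1.
Qed.

Lemma coef_expS a i : (expS m a)`_i = if (i < m)%N then a ^+ i / i`!%:R else 0.
Proof. exact: coef_poly. Qed.

Lemma take_poly_expS M a : (m <= M)%N -> take_poly m (expS M a) = expS m a.
Proof.
move=> mM; apply/polyP => i; rewrite coef_take_poly coef_expS coef_poly.
by case: (ltnP i m) => im //; rewrite (leq_trans im mM).
Qed.

Lemma expS0 : (0 < m)%N -> expS m 0 = 1.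
Proof.
move=> m_gt0; apply/polyP => -[|i]; rewrite coef_expS coef1 ?m_gt0 ?divr1 //.
by rewrite expr0n mul0r if_same.
Qed.

Lemma eqmodX_expSD a b : eqmodX m (expS m a * expS m b) (expS m (a + b)).
Proof.
rewrite /eqmodX take_poly_expS //; apply/polyP => i.
rewrite coef_take_poly coef_expS; case: ifP => // im.
rewrite coefM addrC exprDn mulr_suml; apply: eq_bigr => -[j /=]; rewrite ltnS => ji _.
rewrite !coef_expS (leq_ltn_trans ji im) (leq_ltn_trans (leq_subr j i) im).
rewrite -mulr_natr -(bin_fact ji) !natrM.
have Cij : ('C(i, j)%:R : rat) != 0 by rewrite pnatr_eq0 -lt0n bin_gt0.
by field; rewrite Cij !natr_fact_neq0.
Qed.

Lemma eqmodX_expS_exp a k : eqmodX m (expS m a ^+ k) (expS m (k%:R * a)).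
Proof.
elim: k => [|k IH].
  by case: (posnP m) => [->|m_gt0]; rewrite /eqmodX ?take_poly0l // mul0r expS0.
by rewrite exprS IH eqmodX_expSD mulrS mulrDl mul1r.
Qed.

End RationalSeries.

Section Substitution.
Implicit Types (c : rat) (p q : {poly rat}).

Lemma scaleS_comp c p : scaleS c p = p \Po (c *: 'X).
Proof.
by rewrite /scaleS comp_polyE poly_def; apply: eq_bigr => i _; rewrite exprZn scalerA.
Qed.

Lemma coef_scaleS c p i : (scaleS c p)`_i = p`_i * c ^+ i.
Proof.
rewrite coef_poly; case: ltnP => // /(nth_default 0) ->.
by rewrite mul0r.
Qed.

Lemma scaleSM c p q : scaleS c (p * q) = scaleS c p * scaleS c q.
Proof. by rewrite !scaleS_comp comp_polyM. Qed.

Lemma scaleSB c p q : scaleS c (p - q) = scaleS c p - scaleS c q.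
Proof. by rewrite !scaleS_comp comp_polyB. Qed.

Lemma scaleSX c : scaleS c 'X = c *: 'X.
Proof. by rewrite scaleS_comp comp_polyX. Qed.

Lemma scaleS1 c : scaleS c 1 = 1.
Proof. by rewrite scaleS_comp -polyC1 comp_polyC. Qed.

Lemma scaleS_expS c m a : scaleS c (expS m a) = expS m (c * a).
Proof.
apply/polyP => i; rewrite coef_scaleS !coef_expS exprMn.
by case: ifP => _; [ring | rewrite mul0r].
Qed.

Lemma take_poly_scaleS m c p : take_poly m (scaleS c p) = scaleS c (take_poly m p).
Proof.
apply/polyP => i; rewrite coef_take_poly !coef_scaleS coef_take_poly.
by case: ifP; rewrite ?mul0r.
Qed.

End Substitution.

Add Parametric Morphism (m : nat) (c : rat) : (scaleS c)
  with signature eqmodX m ==> eqmodX m as eqmodX_scaleS_morph.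
Proof. by move=> p q; rewrite /eqmodX !take_poly_scaleS => ->. Qed.

Definition todd_invS m : {poly rat} := \poly_(i < m) ((-1) ^+ i / (i.+1`!)%:R).

Section Todd.
Variable m : nat.
Hypothesis m_gt0 : (0 < m)%N.

Lemma todd_invS_coef0 : (todd_invS m)`_0 = 1.
Proof. by rewrite coef_poly m_gt0 expr0 divr1. Qed.

Lemma mul_todd_invS : eqmodX m (todd_invS m * toddS m) 1.
Proof. exact: mul_invS m_gt0 todd_invS_coef0. Qed.

Lemma toddS_coef0 : (toddS m)`_0 = 1.
Proof. exact: invS_coef0 m_gt0 todd_invS_coef0. Qed.

End Todd.

Lemma mulX_todd_invS m : 'X * todd_invS m = 1 - expS m.+1 (-1).
Proof.
apply/polyP => -[|i]; rewrite coefXM coefB coef1 coef_expS /=.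
  by rewrite expr0 divr1 subrr.
rewrite coef_poly ltnS; case: ifP => _; last by rewrite subr0.
by rewrite sub0r exprS mulN1r mulNr opprK.
Qed.

Section GeneralizedBinomial.
Implicit Type x : rat.

Lemma gbinom0 x : gbinom x 0 = 1.
Proof. by rewrite /gbinom big_ord0 divr1. Qed.

Lemma prod_gbinom_shift x k :
  \prod_(i < k) (x + 1 - (lift ord0 i)%:R) = \prod_(i < k) (x - i%:R).
Proof. by apply: eq_bigr => i _; rewrite lift0 -natr1; ring. Qed.

Lemma gbinom_absorb x j : gbinom (x + 1) j.+1 = (x + 1) / j.+1%:R * gbinom x j.
Proof.
rewrite /gbinom big_ord_recl subr0 prod_gbinom_shift factS natrM.
by field; rewrite natr_fact_neq0 addr_natr_neq0.
Qed.

Lemma gbinomS x k : gbinom (x + 1) k.+1 = gbinom x k.+1 + gbinom x k.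
Proof.
rewrite /gbinom big_ord_recl big_ord_recr /= subr0 prod_gbinom_shift factS natrM.
by field; rewrite natr_fact_neq0 addr_natr_neq0.
Qed.

Lemma gbinom_ge0 x k : k%:R - 1 <= x -> 0 <= gbinom x k.
Proof.
move=> hx; rewrite divr_ge0 //; apply: prodr_ge0 => i _.
have : (i.+1%:R : rat) <= k%:R by rewrite ler_nat.
by rewrite -natr1; lra.
Qed.

Lemma gbinomnn k : gbinom k%:R k = 1.
Proof.
rewrite /gbinom; suff -> : \prod_(i < k) (k%:R - i%:R) = k`!%:R :> rat.
  by rewrite divff ?natr_fact_neq0.
elim: k => [|k IH]; first by rewrite big_ord0.
rewrite big_ord_recl subr0 factS natrM -IH; congr (_ * _).
by apply: eq_bigr => i _; rewrite lift0 -!natr1; ring.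
Qed.

End GeneralizedBinomial.

Section EulerOperator.
Variable R : comNzRingType.
Implicit Types p q : {poly R}.

Definition theta p := 'X * p^`().

Lemma coef_theta p i : (theta p)`_i = p`_i * i%:R.
Proof. by rewrite coefXM; case: i => [|i]; rewrite ?mulr0 // coef_deriv mulr_natr. Qed.

Lemma thetaM p q : theta (p * q) = theta p * q + p * theta q.
Proof. by rewrite /theta derivM; ring. Qed.

Lemma thetaXn p k : theta (p ^+ k.+1) = theta p * p ^+ k *+ k.+1.
Proof. by rewrite /theta deriv_exp /= mulrnAr mulrA. Qed.

Lemma take_poly_theta m p : take_poly m (theta p) = theta (take_poly m p).
Proof.
apply/polyP => i; rewrite coef_take_poly !coef_theta coef_take_poly.
by case: ifP; rewrite ?mul0r.
Qed.

Lemma eqmodX_theta_inv m p q :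
  eqmodX m (p * q) 1 -> eqmodX m (theta q) (- (q ^+ 2 * theta p)).
Proof.
move=> pq1; have theta_pq : eqmodX m (theta (p * q)) 0.
  rewrite /eqmodX take_poly_theta (pq1 : take_poly m _ = _) -take_poly_theta.
  by rewrite /theta -polyC1 derivC mulr0.
have -> : theta q = q * theta (p * q) - q ^+ 2 * theta p - theta q * (p * q - 1).
  by rewrite thetaM; ring.
by rewrite theta_pq pq1 subrr !mulr0 sub0r subr0.
Qed.

End EulerOperator.

Section ThetaRecursion.
Variable m : nat.
Hypothesis m_gt0 : (0 < m)%N.
Local Notation U := (todd_invS m).
Variable T : {poly rat}.
Hypothesis mul_UT : eqmodX m (U * T) 1.

Lemma theta_expS t : eqmodX m (theta (expS m t)) (t *: ('X * expS m t)).
Proof.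
apply/polyP => i; rewrite !coef_take_poly; case: ltnP => // im.
rewrite coef_theta coefZ coefXM; case: i im => [|i] im; rewrite ?mulr0 //=.
rewrite !coef_expS im ltnW // factS natrM exprS.
by field; rewrite natr_fact_neq0 addr_natr_neq0.
Qed.

Lemma theta_todd_invS : eqmodX m (theta U) (1 - (1 + 'X) * U).
Proof.
apply/polyP => i; rewrite !coef_take_poly; case: ltnP => // im.
rewrite coef_theta coefB coef1 mulrDl mul1r coefD coefXM !coef_poly im.
case: i im => [|i] im /=; first by rewrite expr0 mulr0 addr0 divr1 subrr.
rewrite ltnW // !factS !natrM !exprS sub0r.
by field; rewrite natr_fact_neq0 !addr_natr_neq0.
Qed.

Lemma theta_toddS : eqmodX m (theta T) (T * (1 + 'X) - T ^+ 2).
Proof.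
rewrite (eqmodX_theta_inv mul_UT) theta_todd_invS.
have -> : - (T ^+ 2 * (1 - (1 + 'X) * U)) = T * (1 + 'X) * (U * T) - T ^+ 2 by ring.
by rewrite mul_UT mulr1.
Qed.

Lemma coef_expS_toddS_rec t j : (j.+1 < m)%N ->
  (expS m t * T ^+ j.+2)`_j.+1 * j.+1%:R = (t + j.+1%:R) * (expS m t * T ^+ j.+1)`_j.
Proof.
move=> jm; move: (theta_expS t); move: (expS m t) => E thetaE.
have theta_ET : eqmodX m (theta (E * T ^+ j.+1))
   (t%:P * ('X * (E * T ^+ j.+1))
     + (E * T ^+ j.+1 + 'X * (E * T ^+ j.+1) - E * T ^+ j.+2) *+ j.+1).
  rewrite thetaM thetaXn thetaE theta_toddS /eqmodX -mul_polyC !exprS.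
  by congr (take_poly m _); ring.
have := eqmodX_coef jm theta_ET.
rewrite coef_theta coefD coefCM coefXM coefMn !coefB coefD coefXM /=.
by rewrite -[(_ - _) *+ _]mulr_natr; lra.
Qed.

Lemma coef_expS_toddS t j : (j < m)%N ->
  (expS m t * T ^+ j.+1)`_j = gbinom (t + j%:R) j.
Proof.
elim: j => [|j IH] jm.
  have T0 : T`_0 = 1.
    by have := eqmodX_coef m_gt0 mul_UT; rewrite coef0M todd_invS_coef0 // mul1r coef1.
  by rewrite expr1 coef0M T0 coef_expS m_gt0 expr0 divr1 mulr1 gbinom0.
have j1_neq0 : (j.+1%:R : rat) != 0 by rewrite pnatr_eq0.
apply: (mulIf j1_neq0).
rewrite coef_expS_toddS_rec // IH ?(ltn_trans (ltnSn j)) // -natr1 addrA gbinom_absorb.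
by field; rewrite addr_natr_neq0.
Qed.

End ThetaRecursion.

Definition reciprocal (e : nat) (p : {poly rat}) : {poly rat} := \poly_(i < e.+1) p`_(e - i).

Lemma coef_reciprocal e (p : {poly rat}) i :
  (reciprocal e p)`_i = if (i <= e)%N then p`_(e - i) else 0.
Proof. exact: coef_poly. Qed.

Lemma reciprocal_sum e I (r : seq I) (F : I -> {poly rat}) :
  reciprocal e (\sum_(i <- r) F i) = \sum_(i <- r) reciprocal e (F i).
Proof.
apply/polyP => i; rewrite coef_reciprocal !coef_sum.
case: ifP => ie; first by apply: eq_bigr => j _; rewrite coef_reciprocal ie.
by rewrite big1 // => j _; rewrite coef_reciprocal ie.
Qed.

Lemma reciprocal_XnM c e j (p : {poly rat}) : (j < c)%N -> (size p <= e.+1)%N ->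
  reciprocal (c.-1 + e) ('X^j * p) = 'X^(c.-1 - j) * reciprocal e p.
Proof.
move=> jc sp; apply/polyP => l.
have p_eq0 k : (e < k)%N -> p`_k = 0 by move=> ek; rewrite nth_default // (leq_trans sp).
rewrite coef_reciprocal !coefXnM coef_reciprocal.
case: (leqP l (c.-1 + e)) => H1; case: (ltnP (c.-1 + e - l) j) => H2;
  case: (ltnP l (c.-1 - j)) => H3; case: (leqP (l - (c.-1 - j)) e) => H4;
  first [ done | (exfalso; lia) | (rewrite p_eq0; [done|lia]) | (congr (nth _ _ _); lia) ].
Qed.

Lemma geom_polyE c : \sum_(j < c) 'X^j = \poly_(j < c) 1 :> {poly rat}.
Proof. by rewrite poly_def; apply: eq_bigr => j _; rewrite scale1r. Qed.

Definition hpoly (d : seq nat) : {poly rat} := \prod_(c <- d) \sum_(j < c) 'X^j.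

Definition hdeg (d : seq nat) : nat := \sum_(c <- d) c.-1.

Lemma hpoly_cons c d : hpoly (c :: d) = (\sum_(j < c) 'X^j) * hpoly d.
Proof. by rewrite /hpoly big_cons. Qed.

Lemma hdeg_cons c d : hdeg (c :: d) = (c.-1 + hdeg d)%N.
Proof. by rewrite /hdeg big_cons. Qed.

Lemma size_hpoly d : (size (hpoly d) <= (hdeg d).+1)%N.
Proof.
elim: d => [|c d IH]; first by rewrite /hpoly big_nil size_poly1.
have size_geom : (size (\sum_(j < c) 'X^j : {poly rat})%R <= c)%N.
  by rewrite geom_polyE size_poly.
rewrite hpoly_cons hdeg_cons; apply: leq_trans (size_mul_leq _ _) _; lia.
Qed.

Lemma hpoly_reciprocal d : all (fun c => 0 < c)%N d ->
  reciprocal (hdeg d) (hpoly d) = hpoly d.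
Proof.
elim: d => [|c d IH] /= => [_|].
  by rewrite /hpoly /hdeg !big_nil; apply/polyP => -[|i]; rewrite coef_reciprocal !coef1.
move=> /andP[c_gt0 /IH rec_h]; rewrite hpoly_cons hdeg_cons !mulr_suml reciprocal_sum.
rewrite [RHS](reindex_inj rev_ord_inj); apply: eq_bigr => j _ /=.
by rewrite reciprocal_XnM ?size_hpoly // rec_h; congr ('X^_ * _); lia.
Qed.

Lemma hpoly_coef_sym d i : all (fun c => 0 < c)%N d -> (i <= hdeg d)%N ->
  (hpoly d)`_i = (hpoly d)`_(hdeg d - i).
Proof. by move=> /hpoly_reciprocal {1}<- i_le; rewrite coef_reciprocal i_le. Qed.

Lemma hpoly_coef0 d : all (fun c => 0 < c)%N d -> (hpoly d)`_0 = 1.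
Proof.
move=> d_gt0; rewrite -horner_coef0 horner_prod big1_seq // => c /andP[_ cd].
rewrite geom_polyE horner_coef0 coef_poly.
by have := allP d_gt0 c cd; case: c {cd}.
Qed.

Lemma hpoly_coef_ge0 d i : 0 <= (hpoly d)`_i.
Proof.
elim: d i => [|c d IH] i; first by rewrite /hpoly big_nil coef1; case: (i == 0)%N.
rewrite hpoly_cons coefM; apply: sumr_ge0 => j _.
by rewrite mulr_ge0 // geom_polyE coef_poly; case: ifP.
Qed.

Lemma hpoly_coef_ge1 d i : all (fun c => 0 < c)%N d -> (i <= hdeg d)%N ->
  1 <= (hpoly d)`_i.
Proof.
elim: d i => [|c d IH] i /=.
  by rewrite /hpoly /hdeg !big_nil leqn0 coef1 => _ /eqP ->.
move=> /andP[c_gt0 d_gt0]; rewrite hpoly_cons hdeg_cons coefM => i_le.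
have j_lt : (i - hdeg d < i.+1)%N by lia.
rewrite (bigD1 (Ordinal j_lt)) //= -[1]addr0 lerD //.
  rewrite geom_polyE coef_poly ifT ?mul1r; last by lia.
  by apply: IH => //; lia.
apply: sumr_ge0 => j _.
by rewrite mulr_ge0 ?hpoly_coef_ge0 // geom_polyE coef_poly; case: ifP.
Qed.

Definition geom_expS m c : {poly rat} := \sum_(j < c) expS m (-1) ^+ j.

Lemma take_polyXM m (p : {poly rat}) : take_poly m.+1 ('X * p) = 'X * take_poly m p.
Proof. by rewrite mulrC -{1}(expr1 'X) take_polyMXn subSS subn0 expr1 mulrC. Qed.

Lemma mulX_scaleS_todd_invS m c :
  'X * (c *: scaleS c (todd_invS m)) = 1 - expS m.+1 (- c).
Proof.
rewrite -scalerAr scalerAl -scaleSX -scaleSM mulX_todd_invS scaleSB scaleS1.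
by rewrite scaleS_expS mulrN1.
Qed.

Lemma todd_invS_geom m c :
  eqmodX m (todd_invS m * geom_expS m c) (c%:R *: scaleS c%:R (todd_invS m)).
Proof.
have -> : eqmodX m (geom_expS m c) (geom_expS m.+1 c).
  apply: eqmodX_sum => j; rewrite -{1}(take_poly_expS _ (leqnSn m)).
  by rewrite eqmodX_take.
have X_neq0 : ('X : {poly rat}) != 0 by rewrite polyX_eq0.
apply: (mulfI X_neq0); rewrite -!take_polyXM mulX_scaleS_todd_invS.
change (eqmodX m.+1 ('X * (todd_invS m * geom_expS m.+1 c)) (1 - expS m.+1 (- c%:R))).
rewrite mulrA mulX_todd_invS /geom_expS -opprB mulNr -subrX1 opprB.
by rewrite eqmodX_expS_exp mulrN1.
Qed.

Definition scaled_QS_inv m s c : {poly rat} :=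
  expS m (s * c%:R) * (todd_invS m * geom_expS m c).

Lemma scaleS_QS_inv m s c : (0 < m)%N ->
  eqmodX m (scaleS c%:R (QS s m) * scaled_QS_inv m s c) c%:R%:P.
Proof.
move=> m_gt0; rewrite /scaled_QS_inv todd_invS_geom /QS truncE -take_poly_scaleS eqmodX_take.
rewrite scaleSM scaleS_expS.
have -> : expS m (c%:R * - s) * scaleS c%:R (toddS m)
            * (expS m (s * c%:R) * (c%:R *: scaleS c%:R (todd_invS m)))
          = c%:R%:P * (expS m (c%:R * - s) * expS m (s * c%:R))
            * scaleS c%:R (todd_invS m * toddS m).
  by rewrite scaleSM -mul_polyC; ring.
rewrite eqmodX_expSD (mul_todd_invS m_gt0) scaleS1.
by rewrite mulrN [s * _]mulrC addNr (expS0 m_gt0) !mulr1.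
Qed.

Lemma chiKE n d s : all (fun c => 0 < c)%N d ->
  chiK n d s =
  (QS s n.+1 ^+ (n + size d + 1) * \prod_(c <- d) scaled_QS_inv n.+1 s c)`_n.
Proof.
move=> d_gt0; have m_gt0 : (0 < n.+1)%N by [].
rewrite /chiK truncE.
set Den := take_poly n.+1 (\prod_(c <- d) _); set P := \prod_(c <- d) _.
have P_neq0 : P != 0.
  by rewrite prodf_seq_neq0; apply/allP => c /(allP d_gt0); rewrite pnatr_eq0 -lt0n.
have Den_F : eqmodX n.+1 (Den * (P^-1 *: \prod_(c <- d) scaled_QS_inv n.+1 s c)) 1.
  rewrite /Den eqmodX_take -scalerAr -big_split /=.
  rewrite (eqmodX_prod _ (fun c => scaleS_QS_inv s c m_gt0)) -rmorph_prod.
  by rewrite scale_polyC mulVf.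
have QS0 : (QS s n.+1)`_0 = 1.
  by rewrite /QS truncE coef_take_poly coef0M coef_expS toddS_coef0 // expr0 divr1 mulr1.
have Den_invS : eqmodX n.+1 (Den * invS n.+1 Den) 1.
  apply: mul_invS => //; rewrite coef_take_poly -horner_coef0 horner_prod.
  by rewrite big1_seq // => c _; rewrite horner_coef0 coef_scaleS QS0 mulr1.
rewrite coef_take_poly ltnSn (eqmodX_coef (ltnSn n) (_ : eqmodX _ _
    (QS s n.+1 ^+ (n + size d + 1) * (P^-1 *: \prod_(c <- d) scaled_QS_inv n.+1 s c)))).
  by rewrite -scalerAr coefZ mulrA mulfV // mul1r.
by rewrite (eqmodX_inv_unique Den_invS Den_F).
Qed.

Lemma prod_scaled_QS_inv m s d : (0 < m)%N ->
  eqmodX m (\prod_(c <- d) scaled_QS_inv m s c)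
    (expS m (s * (\sum_(c <- d) c)%:R)
     * (todd_invS m ^+ size d * \prod_(c <- d) geom_expS m c)).
Proof.
move=> m_gt0; elim: d => [|c d IH]; first by rewrite !big_nil mulr0 expS0 // !mulr1.
rewrite !big_cons IH /scaled_QS_inv /= exprS.
set E := expS m (s * c%:R); set E' := expS m (s * _); set G := \prod_(c <- d) _.
have -> : E * (todd_invS m * geom_expS m c) * (E' * (todd_invS m ^+ size d * G))
        = E * E' * (todd_invS m * todd_invS m ^+ size d * (geom_expS m c * G)) by ring.
by rewrite /E /E' eqmodX_expSD natrD mulrDr.
Qed.

Lemma prod_geom_expS m d : \prod_(c <- d) geom_expS m c
  = \sum_(i < (hdeg d).+1) ((hpoly d)`_i)%:P * expS m (-1) ^+ i.
Proof.
have -> : \prod_(c <- d) geom_expS m c = (map_poly polyC (hpoly d)).[expS m (-1)].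
  rewrite /hpoly rmorph_prod horner_prod; apply: eq_bigr => c _.
  rewrite rmorph_sum horner_sum; apply: eq_bigr => j _.
  by rewrite rmorphXn /= map_polyX hornerXn.
rewrite (@horner_coef_wide _ (hdeg d).+1) ?size_map_polyC ?size_hpoly //.
by apply: eq_bigr => i _; rewrite coef_map.
Qed.

Lemma c1_CIE n d :
  (c1_CI n d)%:~R = (n + size d + 1)%:R - (\sum_(c <- d) c)%:R :> rat.
Proof. by rewrite /c1_CI rmorphB /= -!pmulrn. Qed.

Lemma chiK_hpoly n d s : all (fun c => 0 < c)%N d ->
  chiK n d s = \sum_(i < (hdeg d).+1)
    (hpoly d)`_i * gbinom (n%:R - s * (c1_CI n d)%:~R - i%:R) n.
Proof.
move=> d_gt0; have m_gt0 : (0 < n.+1)%N by [].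
set T := toddS n.+1; set U := todd_invS n.+1; set c1 : rat := (c1_CI n d)%:~R.
have key : eqmodX n.+1
    (QS s n.+1 ^+ (n + size d + 1) * \prod_(c <- d) scaled_QS_inv n.+1 s c)
    (\sum_(i < (hdeg d).+1)
       ((hpoly d)`_i)%:P * (expS n.+1 (- (s * c1) - i%:R) * T ^+ n.+1)).
  rewrite prod_scaled_QS_inv // prod_geom_expS /QS truncE eqmodX_take exprMn.
  rewrite eqmodX_expS_exp -/T -/U.
  have -> : T ^+ (n + size d + 1) = T ^+ n.+1 * T ^+ size d.
    by rewrite -exprD; congr (_ ^+ _); lia.
  set A := expS _ (_ * - s); set B := expS _ (s * _); set S := \sum_(i < _) _.
  have -> : A * (T ^+ n.+1 * T ^+ size d) * (B * (U ^+ size d * S))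
          = A * B * (U * T) ^+ size d * (T ^+ n.+1 * S) by rewrite exprMn; ring.
  rewrite eqmodX_expSD (mul_todd_invS m_gt0) expr1n mulr1 !mulr_sumr.
  apply: eqmodX_sum => i; rewrite eqmodX_expS_exp.
  set E := expS _ (_ + _); set F := expS _ (_ * -1).
  have -> : E * (T ^+ n.+1 * (((hpoly d)`_i)%:P * F))
          = ((hpoly d)`_i)%:P * (E * F * T ^+ n.+1) by ring.
  rewrite /E /F eqmodX_expSD /eqmodX /c1 c1_CIE.
  by congr (take_poly _ (_ * (expS _ _ * _))); ring.
rewrite chiKE // (eqmodX_coef (ltnSn n) key) coef_sum; apply: eq_bigr => i _.
by rewrite coefCM coef_expS_toddS // ?mul_todd_invS //; congr (_ * gbinom _ _); ring.
Qed.

Section IntegerBinomial.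
Variable n : nat.

Definition binomz (x : int) : rat := gbinom (n%:R + x%:~R) n.

Lemma binomz0 : binomz 0 = 1.
Proof. by rewrite /binomz addr0 gbinomnn. Qed.

Lemma binomz_reflect x : binomz x = (-1) ^+ n * binomz (- x - n%:Z - 1).
Proof.
rewrite /binomz /gbinom mulrA; congr (_ / _).
rewrite (reindex_inj rev_ord_inj) /=.
rewrite (eq_bigr (fun i : 'I_n => - (n%:R + (- x - n%:Z - 1)%:~R - i%:R))) ?prodrN ?card_ord //.
by move=> i _; rewrite natrB ?ltn_ord // !rmorphB /= rmorphN /= -natr1; ring.
Qed.

Lemma binomz_gap x : - (n%:Z) <= x -> x < 0 -> binomz x = 0.
Proof.
case: x => [p|y] // x_ge x_lt; rewrite NegzE in x_ge *.
have y_lt : (n - y.+1 < n)%N by lia.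
rewrite /binomz /gbinom (bigD1 (Ordinal y_lt)) //= natrB; last by lia.
by rewrite rmorphN /= -pmulrn subrr mul0r mul0r.
Qed.

Lemma binomz_split x : binomz x = (if 0 <= x then binomz x else 0)
  + (-1) ^+ n * (if 0 <= - x - n%:Z - 1 then binomz (- x - n%:Z - 1) else 0).
Proof.
case: ifP => x_ge0; case: ifP => y_ge0.
- by exfalso; lia.
- by rewrite mulr0 addr0.
- by rewrite add0r -binomz_reflect.
- by rewrite mulr0 addr0 binomz_gap //; lia.
Qed.

Lemma binomz_ge0 (p : nat) : 0 <= binomz p.
Proof.
apply: gbinom_ge0; have : (0 : rat) <= p%:R by rewrite ler0n.
by rewrite -pmulrn; lra.
Qed.

Lemma binomzS (p : nat) : binomz p <= binomz p.+1.
Proof.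
rewrite /binomz; case: n => [|n']; first by rewrite !gbinom0.
rewrite -!pmulrn -[p.+1%:R]natr1 addrA gbinomS lerDl gbinom_ge0 //.
by rewrite -natr1; have := ler0n rat p; lra.
Qed.

Lemma binomz_mono (p q : nat) : (p <= q)%N -> binomz p <= binomz q.
Proof.
move=> /subnKC <-; elim: (q - p)%N => [|k IH]; first by rewrite addn0.
by apply: le_trans IH _; rewrite addnS binomzS.
Qed.

Lemma gbinom_hockey (v : nat) :
  gbinom (n.+1%:R + v%:R) n.+1 = \sum_(0 <= i < v.+1) binomz (v - i)%N.
Proof.
elim: v => [|v IH]; first by rewrite big_nat1 addr0 gbinomnn subnn binomz0.
rewrite big_nat_recl // subn0.
under eq_bigr => i _ do rewrite subSS.
rewrite -IH -[v.+1%:R]natr1 addrA gbinomS [RHS]addrC; congr (_ + _).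
by rewrite /binomz -pmulrn -!natrD addSnnS.
Qed.

End IntegerBinomial.

Section HilbertFunction.
Variables (n E : nat) (h : nat -> rat).

(* [x^t] h(x) / (1 - x)^(n+1); for h = hpoly d this is the Hilbert function of X. *)
Definition hilbert (t : int) : rat :=
  \sum_(0 <= i < E.+1) h i * (if i%:Z <= t then binomz n (t - i%:Z) else 0).

Lemma hilbert_lt0 t : t < 0 -> hilbert t = 0.
Proof. by move=> t_lt0; rewrite /hilbert big1 // => i _; rewrite ifF ?mulr0 //; lia. Qed.

Lemma hilbert_nat (v : nat) : (v <= E)%N ->
  hilbert v = \sum_(0 <= i < v.+1) h i * binomz n (v - i)%N.
Proof.
move=> vE; rewrite /hilbert (big_cat_nat _ (n := v.+1)) //=.
rewrite [X in _ + X]big1_seq ?addr0; last first.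
  move=> i /andP[_]; rewrite mem_index_iota => /andP[vi _].
  by rewrite ifF ?mulr0 //; lia.
by apply: eq_big_nat => i /andP[_ iv]; rewrite ifT ?subzn //; lia.
Qed.

Lemma hilbert0 : h 0 = 1 -> hilbert 0 = 1.
Proof. by move=> h0; rewrite (hilbert_nat (leq0n E)) big_nat1 h0 subnn binomz0 mulr1. Qed.

Hypothesis h_sym : forall i, (i <= E)%N -> h i = h (E - i).

Lemma hilbert_duality (a : int) :
  \sum_(0 <= i < E.+1) h i * binomz n (- a - i%:Z)
  = hilbert (- a) + (-1) ^+ n * hilbert (a - (n%:Z + 1 - E%:Z)).
Proof.
under eq_bigr => i _ do rewrite binomz_split mulrDr subr_ge0 mulrCA.
rewrite big_split /= -mulr_sumr; congr (_ + (_ * _)).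
rewrite /hilbert big_nat_rev /= add0n; apply: eq_big_nat => i /andP[_ iE].
rewrite subSS -h_sym; last by lia.
have -> : - (- a - (E - i)%N%:Z) - n%:Z - 1 = a - (n%:Z + 1 - E%:Z) - i%:Z.
  by rewrite -subzn; [ring | lia].
by rewrite subr_ge0.
Qed.

Hypothesis h_ge1 : forall i, (i <= E)%N -> 1 <= h i.

Lemma hilbert_excess (v : nat) : (v <= E)%N ->
  hilbert v - gbinom (n.+1%:R + v%:R) n.+1
  = \sum_(0 <= i < v.+1) (h i - 1) * binomz n (v - i)%N.
Proof.
move=> vE; rewrite hilbert_nat // gbinom_hockey -sumrB.
by apply: eq_bigr => i _; rewrite mulrBl mul1r.
Qed.

Lemma hilbert_excess_ge0 (v : nat) : (v <= E)%N ->
  0 <= hilbert v - gbinom (n.+1%:R + v%:R) n.+1.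
Proof.
move=> vE; rewrite hilbert_excess // big_seq; apply: sumr_ge0 => i.
rewrite mem_index_iota => /andP[_ iv].
by rewrite mulr_ge0 ?binomz_ge0 // subr_ge0 h_ge1 //; lia.
Qed.

Lemma hilbert_excess_mono (v u : nat) : (v <= u)%N -> (u <= E)%N ->
  hilbert v - gbinom (n.+1%:R + v%:R) n.+1 <= hilbert u - gbinom (n.+1%:R + u%:R) n.+1.
Proof.
move=> vu uE; rewrite !hilbert_excess //; last by lia.
rewrite [X in _ <= X](big_cat_nat _ (n := v.+1)) //= -[X in X <= _]addr0 lerD //.
  apply: ler_sum_nat => i /andP[_ iv]; apply: ler_wpM2l.
    by rewrite subr_ge0 h_ge1 //; lia.
  by apply: binomz_mono; lia.
rewrite big_seq; apply: sumr_ge0 => i; rewrite mem_index_iota => /andP[vi iu].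
by rewrite mulr_ge0 ?binomz_ge0 // subr_ge0 h_ge1 //; lia.
Qed.

Lemma hilbert_lower_bound (v u : nat) : (v <= u)%N -> (u <= E)%N ->
  gbinom (n.+1%:R + u%:R) n.+1 + (-1) ^+ n * gbinom (n.+1%:R + v%:R) n.+1
  <= hilbert u + (-1) ^+ n * hilbert v.
Proof.
move=> vu uE; rewrite -subr_ge0.
have -> : hilbert u + (-1) ^+ n * hilbert v
          - (gbinom (n.+1%:R + u%:R) n.+1 + (-1) ^+ n * gbinom (n.+1%:R + v%:R) n.+1)
        = (hilbert u - gbinom (n.+1%:R + u%:R) n.+1)
          + (-1) ^+ n * (hilbert v - gbinom (n.+1%:R + v%:R) n.+1) by ring.
rewrite -signr_odd; case: (odd n); rewrite ?expr1 ?expr0 ?mulN1r ?mul1r.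
  by rewrite subr_ge0 hilbert_excess_mono.
by rewrite addr_ge0 ?hilbert_excess_ge0 //; lia.
Qed.

End HilbertFunction.

Lemma sum_hdeg d : all (fun c => 0 < c)%N d -> (\sum_(c <- d) c = hdeg d + size d)%N.
Proof.
elim: d => [|c d IH] /=; first by rewrite /hdeg !big_nil.
by move=> /andP[c_gt0 /IH]; rewrite big_cons hdeg_cons; lia.
Qed.

Section GenusValues.
Variables (n : nat) (d : seq nat).
Hypothesis d_gt0 : all (fun c => 0 < c)%N d.
Local Notation H := (hilbert n (hdeg d) (fun i => (hpoly d)`_i)).

Lemma c1_CI_hdeg : c1_CI n d = n%:Z + 1 - (hdeg d)%:Z.
Proof. by rewrite /c1_CI sum_hdeg //; lia. Qed.

Lemma chiK_hilbert s (a : int) : s * (c1_CI n d)%:~R = a%:~R ->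
  chiK n d s = H (- a) + (-1) ^+ n * H (a - c1_CI n d).
Proof.
move=> sa; rewrite chiK_hpoly // c1_CI_hdeg -hilbert_duality; last first.
  by move=> i; apply: hpoly_coef_sym.
rewrite big_mkord; apply: eq_bigr => i _; congr (_ * _).
by rewrite /binomz -c1_CI_hdeg sa rmorphB rmorphN /= -pmulrn; congr gbinom; ring.
Qed.

Lemma hilbert_hpoly0 : H 0 = 1.
Proof. exact/hilbert0/hpoly_coef0. Qed.

Variables (N k : nat) (q : int).
Hypotheses (N_gt0 : (0 < N)%N) (k_le : (k <= N)%N) (c1_eq : c1_CI n d = q * N%:Z).

Lemma chiK_hilbert_kq : chiK n d (k%:R / N%:R)
  = H (- (k%:Z * q)) + (-1) ^+ n * H ((k%:Z - N%:Z) * q).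
Proof.
rewrite (@chiK_hilbert _ (k%:Z * q)) ?c1_eq; first by congr (_ + _ * H _); ring.
have N_neq0 : (N%:R : rat) != 0 by rewrite pnatr_eq0 -lt0n.
by rewrite !intrM -!pmulrn; field.
Qed.

Lemma chiK_c1_gt0 : 0 < c1_CI n d ->
  let chi := chiK n d (k%:R / N%:R) in
  (k = 0%N -> chi = 1) /\ ((0 < k < N)%N -> chi = 0) /\ (k = N -> chi = (-1) ^+ n).
Proof.
rewrite c1_eq => c1_gt0 chi; have q_gt0 : 0 < q by nia.
rewrite /chi chiK_hilbert_kq; split; [|split].
- by move=> ->; rewrite mul0r oppr0 hilbert_hpoly0 hilbert_lt0 ?mulr0 ?addr0 //; nia.
- by move=> k_bounds; rewrite !hilbert_lt0 ?mulr0 ?addr0 //; nia.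
- by move=> ->; rewrite subrr mul0r hilbert_hpoly0 hilbert_lt0 ?mulr1 ?add0r //; nia.
Qed.

Lemma chiK_c1_eq0 : c1_CI n d = 0 -> chiK n d (k%:R / N%:R) = 1 + (-1) ^+ n.
Proof.
rewrite c1_eq chiK_hilbert_kq => c1_eq0; have -> : q = 0 by nia.
by rewrite !mulr0 oppr0 hilbert_hpoly0 mulr1.
Qed.

Lemma chiK_c1_lt0 : c1_CI n d < 0 ->
  let c1 : rat := (c1_CI n d)%:~R in
  let s : rat := k%:R / N%:R in
  let chi := chiK n d s in
  (0 <= s <= 1/2 ->
     (-1) ^+ n * chi >=
       gbinom (n.+1%:R - (N%:R - k%:R) / N%:R * c1) n.+1
       + (-1) ^+ n * gbinom (n.+1%:R - s * c1) n.+1) /\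
  (s = 1/2 -> odd n -> chi = 0) /\
  (1/2 <= s <= 1 ->
     chi >=
       gbinom (n.+1%:R - s * c1) n.+1
       + (-1) ^+ n * gbinom (n.+1%:R - (N%:R - k%:R) / N%:R * c1) n.+1).
Proof.
move=> c1_lt0 c1 s chi; have q_lt0 : q < 0 by nia.
have N_neq0 : (N%:R : rat) != 0 by rewrite pnatr_eq0 -lt0n.
set v := absz (k%:Z * q); set u := absz ((k%:Z - N%:Z) * q).
have vE : v%:Z = - (k%:Z * q) by rewrite /v; nia.
have uE : u%:Z = (k%:Z - N%:Z) * q by rewrite /u; nia.
have uvE : (u + v <= hdeg d)%N by have := c1_CI_hdeg; lia.
have h_ge1 i : (i <= hdeg d)%N -> 1 <= (hpoly d)`_i by exact: hpoly_coef_ge1.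
have -> : chi = H v + (-1) ^+ n * H u by rewrite /chi chiK_hilbert_kq vE uE.
have -> : n.+1%:R - s * c1 = n.+1%:R + v%:R.
  by rewrite /s /c1 c1_eq [v%:R]pmulrn vE rmorphN !intrM -!pmulrn; field.
have -> : n.+1%:R - (N%:R - k%:R) / N%:R * c1 = n.+1%:R + u%:R.
  by rewrite /c1 c1_eq [u%:R]pmulrn uE !intrM rmorphB -!pmulrn; field.
split; [|split].
- rewrite [_ <= 1/2]ler_pdivrMr ?ltr0n // => /andP[_ s_le].
  have k2_le : (k * 2 <= N)%N by rewrite -(ler_nat rat) natrM; lra.
  by rewrite mulrDr signrMK [X in _ <= X]addrC; apply: hilbert_lower_bound => //; nia.
- move=> /eqP; rewrite eqr_div ?pnatr_eq0 -?lt0n // => /eqP s_half odd_n.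
  have k2_eq : (k * 2 = N)%N by apply/eqP; rewrite -(eqr_nat rat) natrM; apply/eqP; lra.
  have -> : v = u by nia.
  by rewrite -signr_odd odd_n mulN1r subrr.
- rewrite [1/2 <= _]ler_pdivlMr ?ltr0n // => /andP[s_ge _].
  have k2_ge : (N <= k * 2)%N by rewrite -(ler_nat rat) natrM; lra.
  by apply: hilbert_lower_bound => //; nia.
Qed.

End GenusValues.

Theorem theorem1p2 (n : nat) (d : seq nat) (N k : nat) :
  (1 <= size d)%N ->
  all (fun di => 1 < di)%N d ->
  (0 < N)%N ->
  (N%:Z %| c1_CI n d)%Z ->
  (k <= N)%N ->
  let c1 : rat := (c1_CI n d)%:~R in
  let s : rat := k%:R / N%:R in
  let chi := chiK n d s in
  (0 < c1_CI n d ->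
     (k = 0%N -> chi = 1) /\
     ((0 < k < N)%N -> chi = 0) /\
     (k = N -> chi = (-1) ^+ n)) /\
  (c1_CI n d = 0 -> chi = 1 + (-1) ^+ n) /\
  (c1_CI n d < 0 ->
     (0 <= s <= 1/2 ->
        (-1) ^+ n * chi >=
          gbinom (n.+1%:R - (N%:R - k%:R) / N%:R * c1) n.+1
          + (-1) ^+ n * gbinom (n.+1%:R - s * c1) n.+1) /\
     (s = 1/2 -> odd n -> chi = 0) /\
     (1/2 <= s <= 1 ->
        chi >=
          gbinom (n.+1%:R - s * c1) n.+1
          + (-1) ^+ n * gbinom (n.+1%:R - (N%:R - k%:R) / N%:R * c1) n.+1)).
Proof.
move=> _ d_gt1 N_gt0 /dvdzP[q c1_eq] k_le c1 s chi.
have d_gt0 : all (fun c => 0 < c)%N d by apply: sub_all d_gt1 => c /ltnW.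
split; first exact: (chiK_c1_gt0 d_gt0 N_gt0 k_le c1_eq).
split; first exact: (chiK_c1_eq0 d_gt0 N_gt0 k_le c1_eq).
exact: (chiK_c1_lt0 d_gt0 N_gt0 k_le c1_eq).
Qed.
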